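(* Let $r\le p$ be positive integers with $p$ prime, and let $S\subseteq\{0,\dots,p-1\}$ with $|S|=k$. If $S$ does not contain an $r$-weighted arithmetic progression modulo $p$, then the code $\mathcal{C}(r,p,S)$ is an $(r,k)$-batch code of dimension $rp$.
   Context: Array construction: let $n=rp$ and $S=\{s_0<\dots<s_{k-1}\}\subseteq\{0,\dots,p-1\}$. For $s,t\in\{0,\dots,p-1\}$ let $D_{s,t}=\{(i,\langle t+is\rangle_p): i=0,\dots,r-1\}$, where $\langle x\rangle_p=x\bmod p$. An information vector $\boldsymbol{x}\in\{0,1\}^n$ is written as an array $(x_{i,j})$, $(i,j)\in\{0,\dots,r-1\}\times\{0,\dots,p-1\}$, and redundancy bits $\rho_{\ell,t}=\sum_{(i,j)\in D_{s_\ell,t}}x_{i,j}\pmod2$ are added for $\ell\in\{0,\dots,k-1\}$, $t\in\{0,\dots,p-1\}$; $\mathcal{C}(r,p,S)$ is the binary code of all words $(\boldsymbol{x},(\rho_{\ell,t}))$. The set $S$ contains no $r$-weighted arithmetic progression modulo $p$ if there do not exist pairwise distinct $s_1,s_2,s_3\in S$ and integers $0<x,y<r-1$ with $x+y<r$ such that $xs_1+ys_2\equiv(x+y)s_3\pmod p$. A binary linear code encoding $n$ information bits is an $(r,k)$-batch code if for every multiset $\{i_1,\dots,i_k\}$ of information indices there exist $k$ mutually disjoint sets $R_1,\dots,R_k$ of coordinates, each of size at most $r$, such that $x_{i_j}$ is a function of the codeword bits indexed by $R_j$. *)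

From HB Require Import structures.
From mathcomp Require Import all_boot all_order all_algebra.
Unset Printing Implicit Defensive.
Import GRing.Theory.
Local Open Scope ring_scope.

(* It is an (r,k)-batch code
   if for every k-multiset (given as a k-tuple) of information indices there
   are k pairwise disjoint coordinate sets R_j, each of size <= r, such that
   the j-th requested information bit is a function of the codeword bits
   indexed by R_j (the function g only sees the coordinates in R_j). *)
Definition is_batch_code (I C : finType)
    (enc : {ffun I -> 'F_2} -> {ffun C -> 'F_2}) (r k : nat) : Prop :=
  forall req : 'I_k -> I,
    exists R : 'I_k -> {set C},
      (forall j1 j2 : 'I_k, j1 != j2 -> [disjoint R j1 & R j2]) /\
      (forall j : 'I_k, (#|R j| <= r)%N) /\
      (forall j : 'I_k, exists g : (C -> 'F_2) -> 'F_2,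
         forall x : {ffun I -> 'F_2},
           g (fun c => if c \in R j then enc x c else 0) = x (req j)).

(* Information coordinates: (i,j) in [r]x[p];
   redundancy coordinates: (l,t) in [k]x[p] with k = |S|; s_l is the l-th
   smallest element of S (enum of a set of ordinals is increasing). *)
Definition info_idx (r p : nat) : finType := ('I_r * 'I_p)%type.
Definition code_coord (r p : nat) (S : {set 'I_p}) : finType :=
  (('I_r * 'I_p) + ('I_#|S| * 'I_p))%type.

Definition rho (r p : nat) (S : {set 'I_p}) (x : {ffun info_idx r p -> 'F_2})
    (l : 'I_#|S|) (t : 'I_p) : 'F_2 :=
  \sum_(i < r) \sum_(j < p | nat_of_ord j == ((t + i * enum_val l) %% p)%N)
      x (i, j).

Definition enc_arr (r p : nat) (S : {set 'I_p})
    (x : {ffun info_idx r p -> 'F_2}) : {ffun code_coord r p S -> 'F_2} :=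
  [ffun c => match c with
             | inl ij => x ij
             | inr lt => @rho r p S x lt.1 lt.2
             end].

Definition arr_code (r p : nat) (S : {set 'I_p}) : {set {ffun code_coord r p S -> 'F_2}} :=
  [set @enc_arr r p S x | x : {ffun info_idx r p -> 'F_2}].

Definition no_weighted_AP (r p : nat) (S : {set 'I_p}) : Prop :=
  ~ exists (s1 s2 s3 : 'I_p) (x y : nat),
      [/\ [&& s1 \in S, s2 \in S & s3 \in S],
          [&& s1 != s2, s1 != s3 & s2 != s3],
          [&& (0 < x)%N, (x < r - 1)%N, (0 < y)%N, (y < r - 1)%N & (x + y < r)%N]
        & ((x * s1 + y * s2) %% p = ((x + y) * s3) %% p)%N].

From mathcomp Require Import all_boot all_order all_algebra.
From mathcomp Require Import zify ring.
Import GRing.Theory.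

(* Identify the cell (i, j) with the point (i, j) of F_p^2, so that D_{s,t} is
   a line of slope s.  A requested bit x_c is read directly at the first
   occurrence of c in the request; every repeated request is served by a line
   through c, whose parity rho together with the other cells of the line
   determines x_c.  Slopes are chosen greedily.  Two lines through c meet
   nowhere else, so each other requested cell rules out at most one slope.  If
   a line L already in use misses c, two lines through c of distinct slopes
   cannot both meet L: the three meeting points would form a triangle whose
   sides have three distinct slopes s1, s2, s3 of S, and the row gaps x, y of
   its vertices give x s1 + y s2 = (x + y) s3 mod p, an r-weighted arithmetic
   progression.  So each of the other k - 1 requests excludes at most one of
   the k slopes, and a slope is always left. *)

Set Implicit Arguments.
Unset Strict Implicit.
Unset Printing Implicit Defensive.

Lemma leq_card_bigcup (I T : finType) (P : pred I) (B : I -> {set T}) :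
  (#|\bigcup_(i | P i) B i| <= \sum_(i | P i) #|B i|)%N.
Proof.
apply: (big_ind2 (fun (A : {set T}) n => #|A| <= n)%N) => // [|A1 n1 A2 n2 le1 le2].
  by rewrite cards0.
by rewrite (leq_trans (leq_card_setU _ _)) ?leq_add.
Qed.

Section Repeated.
Variables (T : eqType) (k : nat) (f : 'I_k -> T).

Definition repeated (j : 'I_k) : bool := [exists j' : 'I_k, (j' < j)%N && (f j' == f j)].

Lemma first_occurrence j : exists2 j0, ~~ repeated j0 & f j0 = f j.
Proof.
have [j0 /eqP f_j0 j0_min] := @arg_minnP _ j (fun j0 => f j0 == f j) val (eqxx _).
exists j0 => //; apply/existsP => -[j' /andP [lt_j' /eqP f_j']].
by move: (j0_min j'); rewrite f_j' f_j0 eqxx leqNgt lt_j' => /(_ isT).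
Qed.

Lemma first_occurrence_inj j1 j2 :
  ~~ repeated j1 -> ~~ repeated j2 -> f j1 = f j2 -> j1 = j2.
Proof.
move=> /existsPn first1 /existsPn first2 f12; apply/val_inj.
case: (ltngtP j1 j2) => [lt12|lt21|] //.
  by move: (first2 j1); rewrite lt12 f12 eqxx.
by move: (first1 j2); rewrite lt21 f12 eqxx.
Qed.

End Repeated.

Section GreedyColouring.
Variables (n : nat) (L : finType).
Variable need : pred 'I_n.
Variable block : 'I_n -> 'I_n -> pred L.
Variable clash : 'I_n -> L -> 'I_n -> L -> bool.

Definition unblocked (i : 'I_n) (l : L) : Prop :=
  forall j, ~~ need j -> j != i -> ~~ block i j l.

Definition proper_at (col : 'I_n -> L) (i : 'I_n) : Prop :=
  unblocked i (col i) /\ forall j, need j -> (j < i)%N -> ~~ clash i (col i) j (col j).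

Hypothesis n_le_card : (n <= #|L|)%N.
Hypothesis card_block : forall i j, (#|[set l | block i j l]| <= 1)%N.
Hypothesis card_clash : forall i j l',
  need i -> need j -> (j < i)%N -> unblocked j l' -> (#|[set l | clash i l j l']| <= 1)%N.

Lemma extend_colouring (m : nat) (col : 'I_n -> L) (lt_mn : (m < n)%N) :
  (forall i : 'I_n, (i < m)%N -> need i -> proper_at col i) ->
  exists col' : 'I_n -> L, forall i : 'I_n, (i < m.+1)%N -> need i -> proper_at col' i.
Proof.
set im := Ordinal lt_mn => col_ok.
have lt_m (i : 'I_n) : (i < m.+1)%N -> i != im -> (i < m)%N.
  move=> lt_i; apply: contraNT => ge_i; rewrite -val_eqE /=.
  by rewrite eqn_leq -ltnS lt_i leqNgt.
have [need_m|not_need_m] := boolP (need im); last first.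
  exists col => j lt_j need_j; apply: (col_ok _ _ need_j); apply: lt_m lt_j _.
  by apply/eqP => eq_j; move: not_need_m; rewrite -eq_j need_j.
pose bad (j : 'I_n) : {set L} :=
  if need j then (if (j < m)%N then [set l | clash im l j (col j)] else set0)
  else [set l | block im j l].
have card_bad : (#|\bigcup_(j in [set~ im]) bad j| < #|L|)%N.
  apply: leq_ltn_trans (leq_card_bigcup _ _) _.
  apply: (@leq_ltn_trans (\sum_(j in [set~ im]) 1)).
    apply: leq_sum => j _; rewrite /bad.
    case: ifP => need_j; last exact: card_block.
    case: ifP => lt_j; last by rewrite cards0.
    by apply: card_clash => //; have [] := col_ok j lt_j need_j.
  by rewrite sum1_card cardsC1 card_ord; lia.
have [l _ l_good] : exists2 l, l \in [set: L] & l \notin \bigcup_(j in [set~ im]) bad j.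
  apply/subsetPn; apply: contraTN card_bad => /subset_leq_card.
  by rewrite cardsT -leqNgt.
have {}l_good j : j != im -> l \notin bad j.
  by move=> ne_j; apply: contra l_good => bad_l; apply/bigcupP; exists j; rewrite ?in_setC1.
have ne_im (j : 'I_n) : (j < m)%N -> j != im.
  by move=> lt_j; apply: contraTneq lt_j => ->; rewrite ltnn.
pose col' j := if j == im then l else col j.
have col'E j : j != im -> col' j = col j by rewrite /col' => /negbTE ->.
exists col' => i lt_i need_i; have [->|ne_i] := eqVneq i im.
  have col'_im : col' im = l by rewrite /col' eqxx.
  rewrite /proper_at col'_im; split=> [j not_need_j ne_j|j need_j lt_j].
    by move: (l_good j ne_j); rewrite /bad (negbTE not_need_j) inE.
  have ne_j := ne_im j lt_j.
  by move: (l_good j ne_j); rewrite col'E // /bad need_j lt_j inE.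
have lt_im := lt_m i lt_i ne_i.
have [unblocked_i no_clash_i] := col_ok i lt_im need_i.
rewrite /proper_at col'E //; split=> // j need_j lt_j.
by rewrite col'E ?no_clash_i ?ne_im // (ltn_trans lt_j).
Qed.

Lemma greedy_colouring : exists col : 'I_n -> L, forall i, need i -> proper_at col i.
Proof.
have prefix m : (m <= n)%N ->
    exists col : 'I_n -> L, forall i : 'I_n, (i < m)%N -> need i -> proper_at col i.
  elim: m => [|m IHm] le_mn.
    by exists (fun i => enum_val (widen_ord n_le_card i)).
  have [col col_ok] := IHm (ltnW le_mn).
  exact: extend_colouring col_ok.
have [col col_ok] := prefix n (leqnn n).
by exists col => i; apply: col_ok.
Qed.

End GreedyColouring.

Section ArrayCode.
Local Open Scope ring_scope.
Variables (r p : nat).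
Hypotheses (p_prime : prime p) (r_le_p : (r <= p)%N).

Local Notation cell := ('I_r * 'I_p)%type.

Lemma eqFp_nat (a b : nat) : ((a%:R : 'F_p) == b%:R) = (a == b %[mod p]).
Proof.
apply/eqP/eqP => [eq_ab|eq_ab]; first by rewrite -!(val_Fp_nat p_prime) eq_ab.
by rewrite -(Fp_nat_mod p_prime) eq_ab Fp_nat_mod.
Qed.

Lemma Fp_nat_inj (a b : nat) : (a < p)%N -> (b < p)%N -> (a%:R : 'F_p) = b%:R -> a = b.
Proof. by move=> lt_a lt_b /eqP; rewrite eqFp_nat !modn_small // => /eqP. Qed.

Definition rowF (P : cell) : 'F_p := (P.1 : nat)%:R.
Definition colF (P : cell) : 'F_p := (P.2 : nat)%:R.

Lemma cellF_inj (P Q : cell) : rowF P = rowF Q -> colF P = colF Q -> P = Q.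
Proof.
case: P Q => [i j] [i' j']; rewrite /rowF /colF /= => /Fp_nat_inj eq_i /Fp_nat_inj eq_j.
have lt_r (i0 : 'I_r) : (i0 < p)%N by apply: leq_trans r_le_p.
have /val_inj -> := eq_i (lt_r i) (lt_r i').
by have /val_inj -> := eq_j (ltn_ord j) (ltn_ord j').
Qed.

Definition collinear (s : 'I_p) (X Y : cell) : bool :=
  colF Y - colF X == (rowF Y - rowF X) * (s : nat)%:R.

Lemma collinear_refl s X : collinear s X X.
Proof. by rewrite /collinear !subrr mul0r. Qed.

Lemma collinear_sym s X Y : collinear s X Y = collinear s Y X.
Proof. by rewrite /collinear -opprB eqr_oppLR -mulNr opprB. Qed.

Lemma collinear_trans s X Y Z : collinear s X Y -> collinear s Y Z -> collinear s X Z.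
Proof.
move=> /eqP XY /eqP YZ; apply/eqP.
rewrite (_ : colF Z - colF X = (colF Z - colF Y) + (colF Y - colF X)); last by ring.
by rewrite XY YZ; ring.
Qed.

Lemma collinear_row_inj s X Y : collinear s X Y -> X.1 = Y.1 -> X = Y.
Proof.
move=> /eqP XY eq_row; have rowXY : rowF X = rowF Y by rewrite /rowF eq_row.
by apply: cellF_inj => //; apply/eqP; rewrite eq_sym -subr_eq0 XY rowXY subrr mul0r.
Qed.

Lemma collinear_pencil (s1 s2 : 'I_p) X Y :
  s1 != s2 -> collinear s1 X Y -> collinear s2 X Y -> X = Y.
Proof.
move=> ne_s /eqP XY1 /eqP XY2.
have : (rowF Y - rowF X) * ((s1 : nat)%:R - (s2 : nat)%:R) = 0.
  by rewrite mulrBr -XY1 -XY2 subrr.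
move/eqP; rewrite mulf_eq0 !subr_eq0 => /orP [/eqP eq_row | /eqP eq_s].
  apply: cellF_inj; first by rewrite eq_row.
  by apply/eqP; rewrite eq_sym -subr_eq0 XY1 eq_row subrr mul0r.
by move: ne_s; rewrite -val_eqE /= (Fp_nat_inj (ltn_ord _) (ltn_ord _) eq_s) eqxx.
Qed.

Variable S : {set 'I_p}.
Hypothesis noAP : no_weighted_AP r p S.

Lemma no_sorted_triangle (X Y Z : cell) (a b c : 'I_#|S|) :
  (X.1 < Y.1)%N -> (Y.1 < Z.1)%N -> a != b -> a != c -> b != c ->
  collinear (enum_val a) X Y -> collinear (enum_val b) Y Z ->
  collinear (enum_val c) X Z -> False.
Proof.
move=> lt_XY lt_YZ ne_ab ne_ac ne_bc /eqP XY /eqP YZ /eqP XZ; apply: noAP.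
exists (enum_val a), (enum_val b), (enum_val c), (Y.1 - X.1)%N, (Z.1 - Y.1)%N.
have lt_Zr := ltn_ord Z.1.
split; first by rewrite !enum_valP.
- by rewrite !(inj_eq enum_val_inj) ne_ab ne_ac ne_bc.
- by apply/and5P; split; lia.
apply/eqP; rewrite -eqFp_nat natrD !natrM !natrB ?(ltnW lt_XY) ?(ltnW lt_YZ) //.
rewrite (_ : (Y.1 - X.1 + (Z.1 - Y.1) = Z.1 - X.1)%N); last by lia.
rewrite natrB; last by apply: ltnW; apply: ltn_trans lt_YZ.
move: XY YZ XZ; rewrite /rowF /colF => <- <- <-.
by apply/eqP; ring.
Qed.

Lemma no_triangle (X Y Z : cell) (a b c : 'I_#|S|) :
  X != Y -> Y != Z -> X != Z -> a != b -> a != c -> b != c ->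
  collinear (enum_val a) X Y -> collinear (enum_val b) Y Z ->
  collinear (enum_val c) X Z -> False.
Proof.
move=> ne_XY ne_YZ ne_XZ ne_ab ne_ac ne_bc XY YZ XZ.
have ne_row s U V : collinear s U V -> U != V -> U.1 != V.1 :> nat.
  by move=> UV; apply: contra => /eqP /val_inj /(collinear_row_inj UV) ->.
have YX : collinear (enum_val a) Y X by rewrite collinear_sym.
have ZY : collinear (enum_val b) Z Y by rewrite collinear_sym.
have ZX : collinear (enum_val c) Z X by rewrite collinear_sym.
have ne_ba : b != a by rewrite eq_sym.
have ne_ca : c != a by rewrite eq_sym.
have ne_cb : c != b by rewrite eq_sym.
(* Relabel so that the rows increase; the two cyclic orders are impossible. *)
case: (ltngtP X.1 Y.1) (ne_row _ _ _ XY ne_XY) => // o1 _;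
case: (ltngtP Y.1 Z.1) (ne_row _ _ _ YZ ne_YZ) => // o2 _;
case: (ltngtP X.1 Z.1) (ne_row _ _ _ XZ ne_XZ) => // o3 _;
  try by move: o1 o2 o3; clear; lia.
- exact: no_sorted_triangle o1 o2 ne_ab ne_ac ne_bc XY YZ XZ.
- exact: no_sorted_triangle o3 o2 ne_cb ne_ca ne_ba XZ ZY XY.
- exact: no_sorted_triangle o3 o1 ne_ca ne_cb ne_ab ZX XY ZY.
- exact: no_sorted_triangle o1 o3 ne_ac ne_ab ne_cb YX XZ YZ.
- exact: no_sorted_triangle o2 o3 ne_bc ne_ba ne_ca YZ ZX YX.
- exact: no_sorted_triangle o2 o1 ne_ba ne_bc ne_ac ZY YX ZX.
Qed.

(* c.2 - c.1 * s mod p, the offset t of the line D_{s,t} through c; the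
   p - _ avoids truncated subtraction. *)
Definition line_offset (c : cell) (s : 'I_p) : 'I_p :=
  Ordinal (ltn_pmod (c.2 + (p - (c.1 * s) %% p)) (prime_gt0 p_prime)).

Lemma line_offsetE c s :
  ((line_offset c s : nat)%:R : 'F_p) = colF c - rowF c * (s : nat)%:R.
Proof.
rewrite /= Fp_nat_mod // natrD natrB; last exact/ltnW/ltn_pmod/prime_gt0.
by rewrite (pchar_Fp_0 p_prime) Fp_nat_mod // natrM /colF /rowF; ring.
Qed.

Lemma on_lineE c s (P : cell) :
  ((P.2 : nat) == (line_offset c s + P.1 * s) %% p)%N = collinear s c P.
Proof.
rewrite -(modn_small (ltn_ord P.2)) -eqFp_nat natrD natrM line_offsetE.
rewrite /collinear /colF /rowF; apply/eqP/eqP => [->|]; first by ring.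
by move=> eq_c; rewrite -[LHS](subrK (c.2 : nat)%:R) eq_c; ring.
Qed.

Lemma rho_line (x : {ffun info_idx r p -> 'F_2}) (c : cell) (l : 'I_#|S|) :
  rho r p S x l (line_offset c (enum_val l)) = \sum_(P : cell | collinear (enum_val l) c P) x P.
Proof.
rewrite /rho pair_big_dep /=.
by apply: eq_big => [[i j]|[i j] _] //; rewrite on_lineE.
Qed.

Definition recovery_set (c : cell) (l : 'I_#|S|) : {set code_coord r p S} :=
  inr (l, line_offset c (enum_val l)) |: inl @: ([set P | collinear (enum_val l) c P] :\ c).

Lemma inl_recovery_set c l (P : cell) :
  (inl P \in recovery_set c l) = collinear (enum_val l) c P && (P != c).
Proof.
by rewrite !inE /= (mem_imset _ _ (@inl_inj _ _)) !inE andbC.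
Qed.

Lemma inr_recovery_set c l m :
  (inr m \in recovery_set c l) = (m == (l, line_offset c (enum_val l))).
Proof.
rewrite in_setU1 orbC; case: imsetP => [[P _ //]|_ /=].
exact: (inj_eq (@inr_inj _ _)).
Qed.

Lemma card_recovery_set c l : (#|recovery_set c l| <= r)%N.
Proof.
have card_line : (#|[set P | collinear (enum_val l) c P]| <= r)%N.
  suff /leq_card_in : {in [set P | collinear (enum_val l) c P] &, injective (@fst 'I_r 'I_p)}.
    by rewrite card_ord.
  move=> P Q; rewrite !inE => cP cQ; apply: collinear_row_inj.
  by apply: collinear_trans cQ; rewrite collinear_sym.
rewrite cardsU1 (card_imset _ (@inl_inj _ _)).
move: card_line; rewrite (cardsD1 c) inE collinear_refl; apply: leq_trans.
by rewrite leq_add2r leq_b1.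
Qed.

Definition recoverable (R : {set code_coord r p S}) (c : cell) : Prop :=
  exists g : (code_coord r p S -> 'F_2) -> 'F_2, forall x : {ffun info_idx r p -> 'F_2},
    g (fun z => if z \in R then enc_arr r p S x z else 0) = x c.

Lemma recoverable_info c : recoverable [set inl c] c.
Proof. by exists (fun f => f (inl c)) => x; rewrite in_set1 eqxx ffunE. Qed.

Lemma recoverable_recovery_set c l : recoverable (recovery_set c l) c.
Proof.
exists (fun f => f (inr (l, line_offset c (enum_val l))) +
  \sum_(P : cell | collinear (enum_val l) c P && (P != c)) f (inl P)) => x.
rewrite inr_recovery_set eqxx ffunE /= rho_line (bigD1 c) ?collinear_refl //=.
rewrite [X in _ + X](eq_bigr x) => [|P line_P]; last by rewrite inl_recovery_set line_P ffunE.
by rewrite -addrA addrr_pchar2 ?addr0 // pchar_Fp.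
Qed.

Lemma recovery_sets_disjoint_pencil c l l' :
  l != l' -> [disjoint recovery_set c l & recovery_set c l'].
Proof.
move=> ne_l; rewrite disjoints_subset; apply/subsetP => -[P|m]; rewrite in_setC.
  rewrite !inl_recovery_set => /andP [cP ne_P]; apply/negP => /andP [cP' _].
  by move: ne_P; rewrite (collinear_pencil _ cP cP') ?eqxx // (inj_eq enum_val_inj).
rewrite !inr_recovery_set => /eqP ->; apply/negP => /eqP [eq_l _].
by move: ne_l; rewrite eq_l eqxx.
Qed.

Lemma recovery_sets_meet c c' l l' :
  ~~ collinear (enum_val l') c' c ->
  ~~ [disjoint recovery_set c l & recovery_set c' l'] ->
  exists P, [/\ collinear (enum_val l) c P, P != c, collinear (enum_val l') c' P & P != c'].
Proof.
move=> c_off; rewrite disjoints_subset => /subsetPn [[P|m]]; rewrite in_setC negbK.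
  by rewrite !inl_recovery_set => /andP [? ?] /andP [? ?]; exists P.
rewrite !inr_recovery_set => /eqP ->; rewrite xpair_eqE => /andP [/eqP eq_l /eqP eq_off].
by move: c_off; rewrite -on_lineE -eq_off -eq_l on_lineE collinear_refl.
Qed.

Lemma card_meeting_slopes c c' l' :
  ~~ collinear (enum_val l') c' c ->
  (#|[set l | ~~ [disjoint recovery_set c l & recovery_set c' l']]| <= 1)%N.
Proof.
move=> c_off; apply/card_le1_eqP => l1 l2; rewrite !inE.
move=> /(recovery_sets_meet c_off) [P1 [cP1 ne_P1c c'P1 _]].
move=> /(recovery_sets_meet c_off) [P2 [cP2 ne_P2c c'P2 _]].
apply/eqP/negPn/negP; rewrite eq_sym => ne_l12.
have ne_l' l P : collinear (enum_val l) c P -> collinear (enum_val l') c' P -> l != l'.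
  move=> cP c'P; apply: contraNneq c_off => eq_l.
  by apply: collinear_trans c'P _; rewrite collinear_sym -eq_l.
have ne_P12 : P1 != P2.
  apply/negP => /eqP eq_P; move/negP: ne_P1c; apply; rewrite -eq_P in cP2.
  by rewrite (collinear_pencil _ cP1 cP2) ?eqxx ?(inj_eq enum_val_inj).
have P1P2 : collinear (enum_val l') P1 P2.
  by apply: collinear_trans c'P2; rewrite collinear_sym.
apply: (no_triangle _ ne_P12 _ (ne_l' _ _ cP1 c'P1) ne_l12 _ cP1 P1P2 cP2).
- by rewrite eq_sym.
- by rewrite eq_sym.
- by rewrite eq_sym (ne_l' _ _ cP2 c'P2).
Qed.

Hypothesis r_gt0 : (0 < r)%N.
Variable req : 'I_#|S| -> cell.

Local Notation need := (repeated req).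

Definition line_block (i j l : 'I_#|S|) : bool :=
  (req j != req i) && collinear (enum_val l) (req i) (req j).

Definition recovery_clash (i l j l' : 'I_#|S|) : bool :=
  ~~ [disjoint recovery_set (req i) l & recovery_set (req j) l'].

Lemma card_line_block i j : (#|[set l | line_block i j l]| <= 1)%N.
Proof.
apply/card_le1_eqP => l1 l2; rewrite !inE => /andP [ne_req c1] /andP [_ c2].
apply/eqP/negPn/negP => ne_l; move: ne_req.
by rewrite (collinear_pencil _ c2 c1) ?eqxx ?(inj_eq enum_val_inj).
Qed.

Lemma card_recovery_clash i j l' :
  unblocked need line_block j l' -> (#|[set l | recovery_clash i l j l']| <= 1)%N.
Proof.
move=> unblocked_j; rewrite /recovery_clash.
have [eq_req|ne_req] := eqVneq (req i) (req j).
  have eq_l l : ~~ [disjoint recovery_set (req i) l & recovery_set (req j) l'] -> l = l'.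
    apply: contraNeq => ne_l; rewrite eq_req; exact: recovery_sets_disjoint_pencil.
  by apply/card_le1_eqP => l1 l2; rewrite !inE => /eq_l -> /eq_l ->.
apply: card_meeting_slopes.
have [j0 first_j0 req_j0] := first_occurrence req i.
have ne_j0 : j0 != j by apply/eqP => eq_j0; move: ne_req; rewrite -req_j0 eq_j0 eqxx.
by move: (unblocked_j j0 first_j0 ne_j0); rewrite /line_block req_j0 ne_req.
Qed.

Lemma batch_recovery_sets : exists R : 'I_#|S| -> {set code_coord r p S},
  [/\ forall j1 j2, j1 != j2 -> [disjoint R j1 & R j2],
      forall j, (#|R j| <= r)%N
    & forall j, recoverable (R j) (req j)].
Proof.
have [col col_ok] : exists col, forall i, need i -> proper_at need line_block recovery_clash col i.
  apply: greedy_colouring; first by rewrite card_ord.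
    exact: card_line_block.
  by move=> i j l' _ _ _; apply: card_recovery_clash.
pose R j := if need j then recovery_set (req j) (col j) else [set inl (req j)].
have mixed j1 j2 : need j1 -> ~~ need j2 -> [disjoint R j1 & R j2].
  move=> need1 not_need2; rewrite /R need1 (negbTE not_need2).
  rewrite disjoint_sym disjoints1 inl_recovery_set andbC.
  have ne_j : j2 != j1 by apply/eqP => eq_j; move: not_need2; rewrite eq_j need1.
  by have [unblocked1 _] := col_ok j1 need1; apply: unblocked1.
exists R; split=> [j1 j2 ne_j|j|j]; last first.
- by rewrite /R; case: ifP => _; [apply: recoverable_recovery_set | apply: recoverable_info].
- by rewrite /R; case: ifP => _; [apply: card_recovery_set | rewrite cards1].
case N1: (need j1); case N2: (need j2).
- have no_clash j j' : need j -> need j' -> (j' < j)%N -> [disjoint R j & R j'].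
    move=> need_j need_j' lt_j; rewrite /R need_j need_j'.
    by have [_ /(_ j' need_j' lt_j)] := col_ok j need_j; rewrite negbK.
  case: (ltngtP j1 j2) => [lt12|lt21|eq12]; last by rewrite (val_inj eq12) eqxx in ne_j.
    by rewrite disjoint_sym; apply: no_clash.
  exact: no_clash.
- exact: mixed (negbT N2).
- by rewrite disjoint_sym; apply: mixed (negbT N1).
rewrite /R N1 N2 /= disjoints1 in_set1 (inj_eq (@inl_inj _ _)).
by apply: contra ne_j => /eqP /(first_occurrence_inj (negbT N1) (negbT N2)) ->.
Qed.

End ArrayCode.

Lemma card_arr_code (r p : nat) (S : {set 'I_p}) : #|arr_code r p S| = (2 ^ (r * p))%N.
Proof.
rewrite /arr_code card_imset; first by rewrite card_ffun card_Fp // card_prod !card_ord.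
move=> x y /ffunP eq_xy; apply/ffunP => P.
by move: (eq_xy (inl P)); rewrite !ffunE.
Qed.

Theorem theorem9 (r p k : nat) (S : {set 'I_p}) :
  (0 < r)%N -> (r <= p)%N -> prime p -> #|S| = k ->
  @no_weighted_AP r p S ->
  is_batch_code _ _ (enc_arr r p S) r k /\ #|@arr_code r p S| = (2 ^ (r * p))%N.
Proof.
move=> r_gt0 r_le_p p_prime <- noAP; split; last exact: card_arr_code.
move=> req.
have [R [disjoint_R card_R recoverable_R]] := batch_recovery_sets p_prime r_le_p noAP r_gt0 req.
by exists R.
Qed.
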